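(* Let $\Sigma=\mathbb{Z}_6$ and for $n\in\Sigma$ let $n':=\{n+2,n+3,n+4\}$ (mod 6). Define $n\perp m\iff n\in m'$ and, for $A\subseteq\Sigma$, $A^\perp:=\{m\in\Sigma;\ m\perp a\ \forall a\in A\}$; let $\mathcal{L}:=\{A\subseteq\Sigma; A^{\perp\perp}=A\}$ ordered by inclusion. Then $\perp$ is symmetric, anti-reflexive and separating, $\mathcal{L}$ is an irreducible complete atomistic orthocomplemented lattice (a simple closure space on $\Sigma$) which does not satisfy $\Sigma[x]\cup\Sigma[y]\ne\Sigma$ for all coatoms $x,y$ (e.g. $0'\cup3'=\Sigma$). Moreover, with $R:=(\{0,1,2\}\times\{0,1,2\})\cup(\{3,4,5\}\times\{3,4,5\})$ and $S:=(4'\times\Sigma)\cup(\Sigma\times1')$, one has $R,S\in\Sigma'_\circledast$ (for $\mathcal{L}_1=\mathcal{L}_2=\mathcal{L}$) and $R\subsetneqq S\subsetneqq\Sigma\times\Sigma$; consequently there is no complete atomistic coatomistic lattice $\mathcal{L}_0$ with $\mathcal{F}(\mathcal{L}_0)\cong\mathcal{F}(\mathcal{L})\otimes_C\mathcal{F}(\mathcal{L})$.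
   Context: A relation $\perp$ on $\Sigma$ is separating if for any $p\neq q$ there is $r$ with $p\perp r$ and $q\not\perp r$. For a complete lattice: $\Sigma,\Sigma'$ atoms and coatoms, $\Sigma[a]$ atoms below $a$, $\mathsf{Cl}(\omega)=\{\Sigma[a];a\in\omega\}$. $\Sigma'_\circledast$ is the set of $R\subsetneqq\Sigma_1\times\Sigma_2$ such that for every $(p_1,p_2)$, $\{q_1;(q_1,p_2)\in R\}\in\mathsf{Cl}(\Sigma_1'\cup\{1\})$ and $\{q_2;(p_1,q_2)\in R\}\in\mathsf{Cl}(\Sigma_2'\cup\{1\})$. $\mathbf{Chu}_{2_0}$: objects $(A,r,X)$ with $A,X$ pointed sets and $r:A\times X\to\{0,1\}$ vanishing at base points; arrows $(f,g)$ with pointed $f:A\to B$, $g:Y\to X$ and $s(f(a),y)=r(a,g(y))$; $(A,r,X)^\perp=(X,\check r,A)$; $\mathsf{A}_1\otimes_C\mathsf{A}_2=(A_1\wedge A_2,t,\mathbf{Chu}_{2_0}(\mathsf{A}_1,\mathsf{A}_2^\perp))$ with smash product $A\wedge B=((A\setminus\{0\})\times(B\setminus\{0\}))\cup\{0_\sharp\}$, hom-set pointed by the constant arrow, $t((a_1,a_2),(f,g))=r_1(a_1,g(a_2))$. $\mathcal{F}(\mathcal{L})=(\Sigma\cup\{0\},r,\Sigma'\cup\{1\})$ pointed by $0$ and $1$, $r(p,x)=0\iff p\le x$. *)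

From mathcomp Require Import all_boot all_order all_algebra.
Set Implicit Arguments. Unset Strict Implicit. Unset Printing Implicit Defensive.
Import GRing.Theory.

Section OrderNotions.
Variables (T : Type) (le : T -> T -> Prop).

Definition partial_order : Prop :=
  (forall x, le x x) /\ (forall x y z, le x y -> le y z -> le x z) /\
  (forall x y, le x y -> le y x -> x = y).
Definition is_lub (P : T -> Prop) (u : T) : Prop :=
  (forall x, P x -> le x u) /\ (forall v, (forall x, P x -> le x v) -> le u v).
Definition is_glb (P : T -> Prop) (m : T) : Prop :=
  (forall x, P x -> le m x) /\ (forall v, (forall x, P x -> le v x) -> le v m).
Definition complete_lattice : Prop :=
  partial_order /\ (forall P, exists u, is_lub P u) /\ (forall P, exists m, is_glb P m).
Definition is_bottom (b : T) : Prop := forall x, le b x.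
Definition is_top (t : T) : Prop := forall x, le x t.
Definition atom (a : T) : Prop :=
  ~ is_bottom a /\ forall c, le c a -> is_bottom c \/ c = a.
Definition coatom (a : T) : Prop :=
  ~ is_top a /\ forall c, le a c -> is_top c \/ c = a.
Definition atomistic : Prop := forall x, is_lub (fun a => atom a /\ le a x) x.
Definition coatomistic : Prop := forall x, is_glb (fun c => coatom c /\ le x c) x.
Definition orthocomplementation (oc : T -> T) : Prop :=
  (forall x, oc (oc x) = x) /\ (forall x y, le x y -> le (oc y) (oc x)) /\
  (forall x m, is_glb (fun z => z = x \/ z = oc x) m -> is_bottom m) /\
  (forall x u, is_lub (fun z => z = x \/ z = oc x) u -> is_top u).
Definition irreducible : Prop :=
  forall (T1 T2 : Type) (le1 : T1 -> T1 -> Prop) (le2 : T2 -> T2 -> Prop)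
         (f : T -> T1 * T2),
    bijective f ->
    (forall x y, le x y <-> (le1 (f x).1 (f y).1 /\ le2 (f x).2 (f y).2)) ->
    (forall a b : T1, a = b) \/ (forall a b : T2, a = b).
End OrderNotions.

Definition separating (S : Type) (perp : S -> S -> Prop) : Prop :=
  forall p q, p <> q -> exists r, perp p r /\ ~ perp q r.

(* ---------- the category Chu_{2_0} (relations valued in Prop = {0,1}) ---------- *)
Record chu := Chu {
  chuA : Type; chuX : Type; chuA0 : chuA; chuX0 : chuX;
  chur : chuA -> chuX -> Prop;
  chur_A0 : forall x, ~ chur chuA0 x;
  chur_X0 : forall a, ~ chur a chuX0 }.

Definition chu_arrow (C D : chu) (f : chuA C -> chuA D) (g : chuX D -> chuX C) : Prop :=
  f (chuA0 C) = chuA0 D /\ g (chuX0 D) = chuX0 C /\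
  forall a y, @chur D (f a) y <-> @chur C a (g y).

Definition chu_iso (C D : chu) : Prop :=
  exists (f : chuA C -> chuA D) (g : chuX D -> chuX C)
         (f' : chuA D -> chuA C) (g' : chuX C -> chuX D),
    chu_arrow f g /\ chu_arrow f' g' /\
    cancel f f' /\ cancel f' f /\ cancel g g' /\ cancel g' g.

Definition chu_dual (C : chu) : chu :=
  @Chu (chuX C) (chuA C) (chuX0 C) (chuA0 C) (fun x a => chur a x)
       (@chur_X0 C) (@chur_A0 C).

Definition chu_hom (C D : chu) :=
  {fg : (chuA C -> chuA D) * (chuX D -> chuX C) | chu_arrow fg.1 fg.2}.

Lemma chu_const_arrow (C D : chu) :
  chu_arrow (fun _ : chuA C => chuA0 D) (fun _ : chuX D => chuX0 C).
Proof.
split; first by []. split; first by [].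
move=> a y; split => H; [by case: (chur_A0 H) | by case: (chur_X0 H)].
Qed.

Definition chu_hom0 (C D : chu) : chu_hom C D :=
  exist (fun fg => chu_arrow fg.1 fg.2)
        ((fun _ : chuA C => chuA0 D), (fun _ : chuX D => chuX0 C))
        (chu_const_arrow C D).

(* smash product of pointed sets: ((A\{0}) x (B\{0})) u {0#}, 0# = None *)
Definition smash (C1 C2 : chu) : Type :=
  option ({a : chuA C1 | a <> chuA0 C1} * {b : chuA C2 | b <> chuA0 C2}).

Definition tensor_r (C1 C2 : chu) (p : smash C1 C2) (h : chu_hom C1 (chu_dual C2)) : Prop :=
  match p with
  | Some (a1, a2) => chur (sval a1) ((sval h).2 (sval a2))
  | None => False
  end.

Lemma tensor_r_A0 (C1 C2 : chu) h : ~ @tensor_r C1 C2 None h.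
Proof. by []. Qed.

Lemma tensor_r_X0 (C1 C2 : chu) p : ~ @tensor_r C1 C2 p (chu_hom0 C1 (chu_dual C2)).
Proof. case: p => [[a1 a2]|] //=; exact: chur_X0. Qed.

Definition tensor (C1 C2 : chu) : chu :=
  @Chu (smash C1 C2) (chu_hom C1 (chu_dual C2)) None (chu_hom0 C1 (chu_dual C2))
       (@tensor_r C1 C2) (@tensor_r_A0 C1 C2) (@tensor_r_X0 C1 C2).

(* F(L) = (Sigma u {0}, r, Sigma' u {1}), pointed by 0 = None and 1 = None;
   r(p,x) holds (i.e. = 1) iff not p <= x. *)
Definition chuF_r (T : Type) (le : T -> T -> Prop)
  (p : option {a : T | atom le a}) (x : option {c : T | coatom le c}) : Prop :=
  match p, x with
  | Some a, Some c => ~ le (sval a) (sval c)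
  | _, _ => False
  end.

Lemma chuF_r_A0 T (le : T -> T -> Prop) x : ~ @chuF_r T le None x.
Proof. by []. Qed.
Lemma chuF_r_X0 T (le : T -> T -> Prop) p : ~ @chuF_r T le p None.
Proof. by case: p => [[a ?]|]. Qed.

Definition chuF (T : Type) (le : T -> T -> Prop) : chu :=
  @Chu (option {a : T | atom le a}) (option {c : T | coatom le c}) None None
       (@chuF_r T le) (@chuF_r_A0 T le) (@chuF_r_X0 T le).

Local Open Scope ring_scope.

Definition primeZ (n : 'Z_6) : {set 'Z_6} := [set n + 2%:R; n + 3%:R; n + 4%:R].
Definition orth (n m : 'Z_6) : bool := n \in primeZ m.
Definition perpS (A : {set 'Z_6}) : {set 'Z_6} := [set m | [forall a in A, orth m a]].
Definition closedL (A : {set 'Z_6}) : bool := perpS (perpS A) == A.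

Lemma orth_sym n m : orth n m = orth m n.
Proof.
rewrite /orth /primeZ !inE.
by case: n m => [[|[|[|[|[|[|//]]]]]] ?] [[|[|[|[|[|[|//]]]]]] ?].
Qed.

Lemma perpS_anti (A B : {set 'Z_6}) : A \subset B -> perpS B \subset perpS A.
Proof.
move=> /subsetP sAB; apply/subsetP => m; rewrite !inE => /forall_inP H.
by apply/forall_inP => a /sAB; apply: H.
Qed.

Lemma perpS_ext (A : {set 'Z_6}) : A \subset perpS (perpS A).
Proof.
apply/subsetP => a Aa; rewrite inE; apply/forall_inP => m; rewrite inE.
by move/forall_inP/(_ a Aa); rewrite orth_sym.
Qed.

Lemma perpS_closed (A : {set 'Z_6}) : closedL (perpS A).
Proof.
rewrite /closedL eqEsubset perpS_ext andbT.
exact/perpS_anti/perpS_ext.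
Qed.

Definition Lt := {A : {set 'Z_6} | closedL A}.
Definition leL (A B : Lt) : Prop := sval A \subset sval B.
Definition ocL (A : Lt) : Lt := exist (fun B => closedL B) (perpS (sval A)) (perpS_closed (sval A)).

(* Sigma[a]: the atoms (points n, identified with {n}) below a *)
Definition sigmaL (a : Lt) : {set 'Z_6} := [set n | [set n] \subset sval a].

Definition sigma_circ (R : {set 'Z_6 * 'Z_6}) : Prop :=
  R \proper setT /\
  forall p1 p2 : 'Z_6,
    (exists a : Lt, (coatom leL a \/ is_top leL a) /\ [set q1 | (q1, p2) \in R] = sigmaL a) /\
    (exists a : Lt, (coatom leL a \/ is_top leL a) /\ [set q2 | (p1, q2) \in R] = sigmaL a).

Definition lowZ : {set 'Z_6} := [set 0; 1; 2%:R].
Definition highZ : {set 'Z_6} := [set 3%:R; 4%:R; 5%:R].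
Definition Rrel : {set 'Z_6 * 'Z_6} := setX lowZ lowZ :|: setX highZ highZ.
Definition Srel : {set 'Z_6 * 'Z_6} := setX (primeZ 4%:R) setT :|: setX setT (primeZ 1).

From mathcomp Require Import all_boot all_order all_algebra.
From Stdlib Require Import Classical ClassicalEpsilon.
Set Implicit Arguments. Unset Strict Implicit. Unset Printing Implicit Defensive.
Import GRing.Theory.
Local Open Scope ring_scope.

(* A |-> A^perp^perp is a closure operator because _|_ is symmetric, and A |-> A^perp
   is an orthocomplementation on closed sets because _|_ is anti-reflexive.  The
   points {n} and their complements n' are closed, so L is atomistic and every n' is
   a coatom.

   Irreducibility: an isomorphism of L with a product of two nontrivial lattices
   gives two axes u = (1,0) and v = (0,1), both different from Sigma.  Every atom
   lies below an axis and every coatom above one, i.e. u u v = Sigma and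
   u^perp u v^perp = Sigma; hence the complement of u is orthogonal to u.  Since n
   and n+1 are never orthogonal, u is then closed under successor, so u is empty or
   Sigma, which is absurd.

   No L0: in F(L0) with L0 atomistic, if the nonempty column of a coatom c is
   contained in the column of a coatom c', then every atom below c' lies below c,
   so c' <= c and c' = c.  This rigidity is invariant under Chu isomorphism, but in
   F(L) (x)_C F(L) the columns of the Chu morphisms given by R and S are the
   complements of R and S, which are nonempty and strictly nested. *)

Definition asbool (Q : Prop) : bool := if excluded_middle_informative Q then true else false.

Lemma asboolP Q : reflect Q (asbool Q).
Proof. by rewrite /asbool; case: excluded_middle_informative => q; constructor. Qed.

Lemma glb_of_lub T (le : T -> T -> Prop) :
  (forall P, exists u, is_lub le P u) -> forall P, exists m, is_glb le P m.
Proof.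
move=> lub P; have [m [m_ub m_least]] := lub (fun v => forall x, P x -> le v x).
by exists m; split => [x Px | v v_lb]; [apply: m_least => v; apply | apply: m_ub].
Qed.

Section ProductDecomposition.
Variables (T T1 T2 : Type) (le : T -> T -> Prop).
Variables (le1 : T1 -> T1 -> Prop) (le2 : T2 -> T2 -> Prop).
Variables (f : T -> T1 * T2) (g : T1 * T2 -> T).
Hypothesis gK : cancel g f.
Hypothesis le_f : forall x y, le x y <-> le1 (f x).1 (f y).1 /\ le2 (f x).2 (f y).2.
Variables (b t : T).
Hypotheses (le_refl : forall x, le x x) (b_bot : is_bottom le b) (t_top : is_top le t).

Let u := g ((f t).1, (f b).2).
Let v := g ((f b).1, (f t).2).

Let le_g x p : le x (g p) <-> le1 (f x).1 p.1 /\ le2 (f x).2 p.2.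
Proof. by have := le_f x (g p); rewrite gK. Qed.

Let g_le p x : le (g p) x <-> le1 p.1 (f x).1 /\ le2 p.2 (f x).2.
Proof. by have := le_f (g p) x; rewrite gK. Qed.

Let le1_refl x : le1 (f x).1 (f x).1. Proof. exact: ((le_f x x).1 (le_refl x)).1. Qed.
Let le2_refl x : le2 (f x).2 (f x).2. Proof. exact: ((le_f x x).1 (le_refl x)).2. Qed.

Lemma atom_le_axes x : atom le x -> le x u \/ le x v.
Proof.
case=> x_not_bot x_min.
pose x1 := g ((f x).1, (f b).2); pose x2 := g ((f b).1, (f x).2).
have [b1 b2] := (le_f _ _).1 (b_bot x); have [t1 t2] := (le_f _ _).1 (t_top x).
have [x1_bot | x1x] := x_min x1 ((g_le ((f x).1, (f b).2) x).2 (conj (le1_refl x) b2)).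
  have [x2_bot | x2x] := x_min x2 ((g_le ((f b).1, (f x).2) x).2 (conj b1 (le2_refl x))).
    exfalso; apply: x_not_bot => y; apply/le_f; split.
      exact: proj1 ((g_le _ y).1 (x1_bot y)).
    exact: proj2 ((g_le _ y).1 (x2_bot y)).
  right; apply/le_g; split => //=.
  by rewrite -{1}x2x /x2 gK; exact: le1_refl.
left; apply/le_g; split => //=.
by rewrite -{1}x1x /x1 gK; exact: le2_refl.
Qed.

Lemma coatom_ge_axes x : coatom le x -> le u x \/ le v x.
Proof.
case=> x_not_top x_max.
pose x1 := g ((f x).1, (f t).2); pose x2 := g ((f t).1, (f x).2).
have [b1 b2] := (le_f _ _).1 (b_bot x); have [t1 t2] := (le_f _ _).1 (t_top x).
have [x1_top | x1x] := x_max x1 ((le_g x ((f x).1, (f t).2)).2 (conj (le1_refl x) t2)).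
  have [x2_top | x2x] := x_max x2 ((le_g x ((f t).1, (f x).2)).2 (conj t1 (le2_refl x))).
    exfalso; apply: x_not_top => y; apply/le_f; split.
      exact: proj1 ((le_g y _).1 (x1_top y)).
    exact: proj2 ((le_g y _).1 (x2_top y)).
  left; apply/g_le; split => //=.
  by rewrite -{1}x2x /x2 gK; exact: le1_refl.
right; apply/g_le; split => //=.
by rewrite -{1}x1x /x1 gK; exact: le2_refl.
Qed.

Hypothesis le_anti : forall x y, le x y -> le y x -> x = y.

Lemma axis1_top_factor2_trivial : u = t -> forall z z' : T2, z = z'.
Proof.
move=> ut; suff zb z : z = (f b).2 by move=> z z'; rewrite (zb z) (zb z').
have tb : (f t).2 = (f b).2 by rewrite -ut /u gK.
pose w := g ((f b).1, z).
have wb : w = b.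
  apply: le_anti (b_bot w); apply/g_le; split; first exact: le1_refl.
  by rewrite -tb; exact: proj2 ((g_le _ t).1 (t_top w)).
by rewrite -wb /w gK.
Qed.

Lemma axis2_top_factor1_trivial : v = t -> forall z z' : T1, z = z'.
Proof.
move=> vt; suff zb z : z = (f b).1 by move=> z z'; rewrite (zb z) (zb z').
have tb : (f t).1 = (f b).1 by rewrite -vt /v gK.
pose w := g (z, (f b).2).
have wb : w = b.
  apply: le_anti (b_bot w); apply/g_le; split; last exact: le2_refl.
  by rewrite -tb; exact: proj1 ((g_le _ t).1 (t_top w)).
by rewrite -wb /w gK.
Qed.

End ProductDecomposition.

Definition column_rigid (C : chu) : Prop :=
  forall y y' : chuX C, (exists a, chur a y) ->
    (forall a, chur a y -> chur a y') -> forall a, chur a y' -> chur a y.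

Lemma chuF_column_rigid T (le : T -> T -> Prop) : atomistic le -> column_rigid (chuF le).
Proof.
move=> le_atomistic [c|] y' [[[a aa]|] //= a_not_c] col_sub.
case: y' col_sub => [c' |] col_sub; last by move=> [?|] [].
have le_c'c : le (sval c') (sval c).
  apply: (le_atomistic (sval c')).2 => x [ax x_c']; apply: NNPP => x_not_c.
  exact: (col_sub (Some (exist _ x ax)) x_not_c x_c').
case: ((svalP c').2 _ le_c'c) => [c_top | cc'].
  by case: a_not_c; apply: c_top.
by move=> [x|] //=; rewrite cc'.
Qed.

Lemma chu_iso_column_rigid C D : chu_iso C D -> column_rigid C -> column_rigid D.
Proof.
move=> [f [g [f' [_ [[_ [_ fg]] [_ [_ [f'K _]]]]]]]] rigidC y y' [a ay] col_sub b.
have col_sub' x : chur x (g y) -> chur x (g y') by move=> /fg/col_sub/fg.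
have ne : exists x, chur x (g y) by exists (f' a); apply/fg; rewrite f'K.
by rewrite -(f'K b) => /fg/(rigidC _ _ ne col_sub')/fg.
Qed.

Lemma orth_antirefl n : ~~ orth n n.
Proof. by rewrite /orth /primeZ !inE; case: n => [[|[|[|[|[|[|//]]]]]] ?]. Qed.

Lemma orth_succ n : ~~ orth n (n + 1).
Proof. by rewrite /orth /primeZ !inE; case: n => [[|[|[|[|[|[|//]]]]]] ?]. Qed.

Lemma primeZ_add3 k : primeZ (k + 3%:R) = ~: primeZ k.
Proof.
apply/setP => n; rewrite /primeZ !inE.
by case: k n => [[|[|[|[|[|[|//]]]]]] ?] [[|[|[|[|[|[|//]]]]]] ?].
Qed.

Lemma primeZ_subset k m : (primeZ k \subset primeZ m) = (k == m).
Proof.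
rewrite {1}/primeZ !subUset !sub1set /primeZ !inE.
by case: k m => [[|[|[|[|[|[|//]]]]]] ?] [[|[|[|[|[|[|//]]]]]] ?].
Qed.

Lemma lowZE : lowZ = primeZ 4%:R.
Proof. by apply/setP => n; rewrite /lowZ /primeZ !inE; case: n => [[|[|[|[|[|[|//]]]]]] ?]. Qed.

Lemma highZE : highZ = ~: lowZ.
Proof. by apply/setP => n; rewrite /highZ /lowZ !inE; case: n => [[|[|[|[|[|[|//]]]]]] ?]. Qed.

Lemma primeZ1E : primeZ 1 = ~: lowZ.
Proof. by rewrite lowZE -primeZ_add3; congr primeZ; apply: val_inj. Qed.

Lemma mem_perpS m A : (m \in perpS A) = (A \subset primeZ m).
Proof. by rewrite inE; apply/forall_inP/subsetP => H a /H; rewrite orth_sym. Qed.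

Lemma perpS_disjoint (A : {set 'Z_6}) n : n \in A -> n \notin perpS A.
Proof.
by move=> An; rewrite mem_perpS; apply/negP => /subsetP/(_ n An); apply/negP/orth_antirefl.
Qed.

Lemma perpS_set1 n : perpS [set n] = primeZ n.
Proof. by apply/setP => m; rewrite mem_perpS sub1set; exact: orth_sym. Qed.

Lemma perpS_prime n : perpS (primeZ n) = [set n].
Proof. by apply/setP => m; rewrite mem_perpS primeZ_subset inE. Qed.

Lemma perpS_set0 : perpS set0 = setT.
Proof. by apply/setP => m; rewrite mem_perpS sub0set inE. Qed.

Lemma perpS_setT : perpS setT = set0.
Proof. by apply/setP => m; rewrite in_set0; apply/negbTE/perpS_disjoint/in_setT. Qed.

Lemma closedL_set0 : closedL set0.
Proof. by rewrite /closedL perpS_set0 perpS_setT. Qed.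

Lemma closedL_setT : closedL setT.
Proof. by rewrite /closedL perpS_setT perpS_set0. Qed.

Lemma closedL_set1 n : closedL [set n].
Proof. by rewrite /closedL perpS_set1 perpS_prime. Qed.

Lemma closedL_prime n : closedL (primeZ n).
Proof. by rewrite /closedL perpS_prime perpS_set1. Qed.

Lemma closedL_setI A B : closedL A -> closedL B -> closedL (A :&: B).
Proof.
move=> /eqP clA /eqP clB; rewrite /closedL eqEsubset perpS_ext andbT subsetI.
apply/andP; split.
  by rewrite -{2}clA; apply/perpS_anti/perpS_anti/subsetIl.
by rewrite -{2}clB; apply/perpS_anti/perpS_anti/subsetIr.
Qed.

Lemma orth_separating : separating (fun n m : 'Z_6 => orth n m).
Proof.
move=> p q neq_pq.
have : q \notin perpS (perpS [set p]) by rewrite (eqP (closedL_set1 p)) inE eq_sym; exact/eqP.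
rewrite inE negb_forall_in => /existsP[r /andP[pr not_qr]].
exists r; split; last exact/negP.
by move: pr; rewrite perpS_set1 orth_sym.
Qed.

Lemma perp_complement_trivial A : ~: A \subset perpS A -> A = set0 \/ A = setT.
Proof.
move=> perpC; case: (set_0Vmem A) => [-> | [n An]]; [by left | right].
have succA x : x \in A -> x + 1 \in A.
  move=> Ax; apply: contraT => notA.
  have : x + 1 \in perpS A by apply: (subsetP perpC); rewrite inE.
  rewrite mem_perpS => /subsetP/(_ x Ax) orth_x_x1.
  by move: (orth_succ x); rewrite /orth orth_x_x1.
have shiftA k : n + k%:R \in A.
  elim: k => [|k IH]; first by rewrite addr0.
  by rewrite -[k.+1]addn1 natrD addrA; exact: succA.
by apply/setP => m; rewrite inE; have := shiftA (m - n); rewrite natr_Zp addrC subrK.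
Qed.

Lemma orthogonal_cover A B :
  A :|: B = setT -> perpS A :|: perpS B = setT -> A = setT \/ B = setT.
Proof.
move=> coverAB coverP.
have BperpA : B \subset perpS A.
  apply/subsetP => b Bb; have := in_setT b; rewrite -coverP in_setU.
  case/orP => // bB; have := perpS_disjoint Bb; by rewrite bB.
have : ~: A \subset perpS A.
  apply: subset_trans BperpA; apply/subsetP => x; rewrite inE => Ax.
  by have := in_setT x; rewrite -coverAB in_setU (negbTE Ax).
case/perp_complement_trivial => [A0|]; [right | by left].
by rewrite -coverAB A0 set0U.
Qed.

Lemma prime_max A k : closedL A -> primeZ k \subset A -> A = primeZ k \/ A = setT.
Proof.
move=> /eqP clA kA; have [Ak | /subsetPn [m Am not_mk]] := boolP (A \subset primeZ k).
  by left; apply/eqP; rewrite eqEsubset Ak kA.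
right; rewrite -clA -perpS_set0; congr perpS; apply/setP => j; rewrite in_set0 mem_perpS.
apply/negP => Aj.
have kj : k = j by apply/eqP; rewrite -primeZ_subset; exact: subset_trans kA Aj.
by move: not_mk; rewrite kj (subsetP Aj m Am).
Qed.

Definition mkL A (clA : closedL A) : Lt := exist (fun B => closedL B) A clA.
Definition Lbot : Lt := mkL closedL_set0.
Definition Ltop : Lt := mkL closedL_setT.
Definition single n : Lt := mkL (closedL_set1 n).
Definition Ck k : Lt := mkL (closedL_prime k).

Lemma perpS_closure (x : Lt) : perpS (perpS (sval x)) = sval x.
Proof. exact/eqP/(svalP x). Qed.

Lemma leL_anti x y : leL x y -> leL y x -> x = y.
Proof. by move=> xy yx; apply: val_inj; apply/eqP; rewrite eqEsubset xy yx. Qed.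

Lemma leL_bot x : leL Lbot x. Proof. exact: sub0set. Qed.
Lemma leL_top x : leL x Ltop. Proof. exact: subsetT. Qed.

Lemma leL_lub (P : Lt -> Prop) : exists u, is_lub leL P u.
Proof.
pose U := [set n | asbool (exists A : Lt, P A /\ n \in sval A)].
exists (mkL (perpS_closed (perpS U))); split.
  move=> A PA; apply: subset_trans (perpS_ext U).
  by apply/subsetP => n nA; rewrite inE; apply/asboolP; exists A.
move=> V V_ub; rewrite /leL /= -(perpS_closure V); apply/perpS_anti/perpS_anti.
by apply/subsetP => n; rewrite inE => /asboolP [A [PA nA]]; exact: subsetP (V_ub A PA) n nA.
Qed.

Lemma complete_leL : complete_lattice leL.
Proof.
split; last by split; [exact: leL_lub | exact: glb_of_lub leL_lub].
split; first by move=> x; exact: subxx.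
by split; [move=> x y z; exact: subset_trans | exact: leL_anti].
Qed.

Lemma not_bottom_single n : ~ is_bottom leL (single n).
Proof. by move=> /(_ Lbot); rewrite /leL /= sub1set inE. Qed.

Lemma atom_single n : atom leL (single n).
Proof.
split; first exact: not_bottom_single.
move=> c; rewrite /leL /= subset1 => /orP [/eqP cn | /eqP c0].
  by right; apply: val_inj.
by left => y; rewrite /leL c0 sub0set.
Qed.

Lemma atom_singleton a : atom leL a -> exists n, sval a = [set n].
Proof.
case=> a_not_bot a_min; have [a0 | [n an]] := set_0Vmem (sval a).
  by case: a_not_bot => y; rewrite /leL a0 sub0set.
have na : leL (single n) a by rewrite /leL /= sub1set.
by exists n; case: (a_min _ na) => [/not_bottom_single | <-].
Qed.

Lemma atomistic_leL : atomistic leL.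
Proof.
move=> x; split => [a [] // | v v_ub]; apply/subsetP => n nx.
have : leL (single n) v by apply: v_ub; split; [exact: atom_single | rewrite /leL /= sub1set].
by rewrite /leL /= sub1set.
Qed.

Lemma orthocomplementation_ocL : orthocomplementation leL ocL.
Proof.
split; first by move=> x; apply: val_inj; rewrite /= perpS_closure.
split; first by move=> x y; exact: perpS_anti.
split.
  move=> x m [m_lb _] y; apply/subsetP => n nm; exfalso.
  have nx := subsetP (m_lb x (or_introl erefl)) n nm.
  have nox := subsetP (m_lb (ocL x) (or_intror erefl)) n nm.
  by have := perpS_disjoint nx; rewrite nox.
move=> x u [u_ub _] y; apply/subsetP => n _.
have : perpS (sval u) = set0.
  apply/setP => m; rewrite in_set0; apply/negP => mu.
  have mox := subsetP (perpS_anti (u_ub x (or_introl erefl))) m mu.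
  have mx := subsetP (perpS_anti (u_ub (ocL x) (or_intror erefl))) m mu.
  by rewrite /= perpS_closure in mx; have := perpS_disjoint mx; rewrite mox.
by move=> u0; rewrite -(perpS_closure u) u0 perpS_set0 inE.
Qed.

Lemma coatom_Ck k : coatom leL (Ck k).
Proof.
split.
  move=> /(_ Ltop); rewrite /leL /= => /subsetP /(_ k (in_setT k)).
  by apply/negP/orth_antirefl.
move=> c kc; have [ck | cT] := prime_max (svalP c) kc.
  by right; apply: val_inj.
by left => y; rewrite /leL cT subsetT.
Qed.

Lemma irreducible_leL : irreducible leL.
Proof.
move=> T1 T2 le1 le2 f [g _ gK] le_f.
have le_refl x : leL x x by exact: subxx.
pose u := g ((f Ltop).1, (f Lbot).2); pose v := g ((f Lbot).1, (f Ltop).2).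
have [uT | u_ne] := eqVneq (sval u) setT.
  by right; apply: (axis1_top_factor2_trivial gK le_f le_refl leL_bot leL_top leL_anti); apply: val_inj.
have [vT | v_ne] := eqVneq (sval v) setT.
  by left; apply: (axis2_top_factor1_trivial gK le_f le_refl leL_bot leL_top leL_anti); apply: val_inj.
have cover : sval u :|: sval v = setT.
  apply/setP => n; rewrite !inE.
  have := atom_le_axes gK le_f le_refl leL_bot leL_top (atom_single n).
  by rewrite /leL /= !sub1set => -[nu | nv]; apply/orP; [left | right].
have perp_cover : perpS (sval u) :|: perpS (sval v) = setT.
  apply/setP => k; rewrite in_setU in_setT !mem_perpS.
  have := coatom_ge_axes gK le_f le_refl leL_bot leL_top (coatom_Ck k).
  by rewrite /leL /= => -[uk | vk]; apply/orP; [left | right].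
by case: (orthogonal_cover cover perp_cover) => /eqP; rewrite ?(negbTE u_ne) ?(negbTE v_ne).
Qed.

Lemma sigmaL_E (a : Lt) : sigmaL a = sval a.
Proof. by apply/setP => n; rewrite inE sub1set. Qed.

Lemma sigmaL_coatom_or_top (A : {set 'Z_6}) :
  A = setT \/ (exists k, A = primeZ k) ->
  exists a : Lt, (coatom leL a \/ is_top leL a) /\ A = sigmaL a.
Proof.
case=> [-> | [k ->]]; last by exists (Ck k); rewrite sigmaL_E; split; [left; exact: coatom_Ck |].
by exists Ltop; rewrite sigmaL_E; split; [right; exact: leL_top |].
Qed.

Lemma sigma_circ_of (X : {set 'Z_6 * 'Z_6}) :
  X \proper setT ->
  (forall p, [set q | (q, p) \in X] = setT \/ exists k, [set q | (q, p) \in X] = primeZ k) ->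
  (forall p, [set q | (p, q) \in X] = setT \/ exists k, [set q | (p, q) \in X] = primeZ k) ->
  sigma_circ X.
Proof.
move=> X_proper rows cols; split => // p1 p2.
by split; apply: sigmaL_coatom_or_top.
Qed.

Lemma lowZ_level (c : bool) : [set q | (q \in lowZ) == c] = primeZ (if c then 4%:R else 1).
Proof.
case: c; apply/setP => q; rewrite inE; first by rewrite eqb_id lowZE.
by rewrite eqbF_neg primeZ1E in_setC.
Qed.

Lemma mem_Rrel q p : ((q, p) \in Rrel) = ((q \in lowZ) == (p \in lowZ)).
Proof.
rewrite /Rrel highZE in_setU !in_setX !in_setC.
by case: (q \in lowZ); case: (p \in lowZ).
Qed.

Lemma mem_Srel q p : ((q, p) \in Srel) = (q \in lowZ) || (p \notin lowZ).
Proof. by rewrite /Srel in_setU !in_setX -lowZE primeZ1E in_setC !in_setT andbT. Qed.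

Lemma Rrel_proper_Srel : Rrel \proper Srel.
Proof.
rewrite properE; apply/andP; split.
  apply/subsetP => -[q p]; rewrite mem_Rrel mem_Srel.
  by case: (q \in lowZ); case: (p \in lowZ).
apply/subsetPn; exists (0, 3%:R); first by rewrite mem_Srel !inE.
by rewrite mem_Rrel !inE.
Qed.

Lemma Srel_proper_setT : Srel \proper setT.
Proof.
rewrite properT; apply/negP => /eqP ST.
by have := in_setT (3%:R : 'Z_6, 0 : 'Z_6); rewrite -ST mem_Srel !inE.
Qed.

Lemma sigma_circ_Rrel : sigma_circ Rrel.
Proof.
apply: sigma_circ_of; first exact: proper_trans Rrel_proper_Srel Srel_proper_setT.
  move=> p; right; exists (if p \in lowZ then 4%:R else 1); rewrite -lowZ_level.
  by apply/setP => q; rewrite [LHS]in_set [RHS]in_set mem_Rrel.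
move=> p; right; exists (if p \in lowZ then 4%:R else 1); rewrite -lowZ_level.
by apply/setP => q; rewrite [LHS]in_set [RHS]in_set mem_Rrel eq_sym.
Qed.

Lemma sigma_circ_Srel : sigma_circ Srel.
Proof.
apply: sigma_circ_of; first exact: Srel_proper_setT.
  move=> p; case pl: (p \in lowZ); [right; exists 4%:R | left];
    by apply/setP => q; rewrite [LHS]in_set mem_Srel pl ?orbF ?orbT -?lowZE ?in_setT.
move=> p; case pl: (p \in lowZ); [left | right; exists 1];
  by apply/setP => q; rewrite [LHS]in_set mem_Srel pl ?in_setT // primeZ1E in_setC.
Qed.

Definition coatomX k : chuX (chuF leL) := Some (exist _ (Ck k) (coatom_Ck k)).
Definition low_atom (A : {a : Lt | atom leL a}) : bool := sval (sval A) \subset lowZ.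

(* The Chu morphisms F(L) -> F(L)^perp given by R and S: an atom p is sent to the
   coatom (or to 1 = None) whose atoms form the row {q | (q, p) \in X}, resp. the
   column {q | (p, q) \in X}, of the relation X. *)
Definition R_row (a : chuA (chuF leL)) : chuX (chuF leL) :=
  if a is Some A then coatomX (if low_atom A then 4%:R else 1) else None.
Definition S_row (a : chuA (chuF leL)) : chuX (chuF leL) :=
  if a is Some A then (if low_atom A then coatomX 4%:R else None) else None.
Definition S_col (a : chuA (chuF leL)) : chuX (chuF leL) :=
  if a is Some A then (if low_atom A then None else coatomX 1) else None.

Lemma low_atomE A n : sval (sval A) = [set n] -> low_atom A = (n \in lowZ).
Proof. by move=> An; rewrite /low_atom An sub1set. Qed.

Lemma chuF_r_coatomX A n k :
  sval (sval A) = [set n] -> chuF_r (Some A) (coatomX k) <-> n \notin primeZ k.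
Proof. by move=> An; rewrite /chuF_r /coatomX /leL /= An sub1set; split => /negP. Qed.

Lemma chuF_r_R_row A B n m : sval (sval A) = [set n] -> sval (sval B) = [set m] ->
  chuF_r (Some A) (R_row (Some B)) <-> (n, m) \notin Rrel.
Proof.
move=> An Bm; apply: iff_trans (chuF_r_coatomX _ An) _.
by rewrite (low_atomE Bm) -lowZ_level in_set mem_Rrel.
Qed.

Lemma chuF_r_S_row A B n m : sval (sval A) = [set n] -> sval (sval B) = [set m] ->
  chuF_r (Some A) (S_row (Some B)) <-> (n, m) \notin Srel.
Proof.
move=> An Bm; rewrite /S_row (low_atomE Bm) mem_Srel.
case: (m \in lowZ) => /=; last by rewrite orbT; split.
by apply: iff_trans (chuF_r_coatomX _ An) _; rewrite -lowZE orbF.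
Qed.

Lemma chuF_r_S_col A B n m : sval (sval A) = [set n] -> sval (sval B) = [set m] ->
  chuF_r (Some B) (S_col (Some A)) <-> (n, m) \notin Srel.
Proof.
move=> An Bm; rewrite /S_col (low_atomE An) mem_Srel.
case: (n \in lowZ) => /=; first by split.
by apply: iff_trans (chuF_r_coatomX _ Bm) _; rewrite primeZ1E in_setC.
Qed.

Lemma R_row_arrow : @chu_arrow (chuF leL) (chu_dual (chuF leL)) R_row R_row.
Proof.
do 2 split => //; move=> [A|] [B|] /=; try by split.
have [n An] := atom_singleton (svalP A); have [m Bm] := atom_singleton (svalP B).
apply: iff_trans (chuF_r_R_row Bm An) _; apply: iff_trans _ (iff_sym (chuF_r_R_row An Bm)).
by rewrite !mem_Rrel eq_sym.
Qed.

Lemma S_col_row_arrow : @chu_arrow (chuF leL) (chu_dual (chuF leL)) S_col S_row.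
Proof.
do 2 split => //; move=> [A|] [B|] /=; try by split.
have [n An] := atom_singleton (svalP A); have [m Bm] := atom_singleton (svalP B).
exact: iff_trans (chuF_r_S_col An Bm) (iff_sym (chuF_r_S_row An Bm)).
Qed.

Definition R_hom : chu_hom (chuF leL) (chu_dual (chuF leL)) := exist _ (R_row, R_row) R_row_arrow.
Definition S_hom : chu_hom (chuF leL) (chu_dual (chuF leL)) := exist _ (S_col, S_row) S_col_row_arrow.

Lemma Some_neq_None T (x : T) : Some x <> None. Proof. by []. Qed.

Definition atom_pt n : {a : chuA (chuF leL) | a <> chuA0 (chuF leL)} :=
  let a := exist (atom leL) (single n) (atom_single n) in exist _ (Some a) (@Some_neq_None _ a).
Definition tpoint n1 n2 : chuA (tensor (chuF leL) (chuF leL)) := Some (atom_pt n1, atom_pt n2).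

Lemma tensor_r_tpoint_R n1 n2 : tensor_r (tpoint n1 n2) R_hom <-> (n1, n2) \notin Rrel.
Proof. exact: chuF_r_R_row. Qed.

Lemma tensor_r_tpoint_S n1 n2 : tensor_r (tpoint n1 n2) S_hom <-> (n1, n2) \notin Srel.
Proof. exact: chuF_r_S_row. Qed.

Lemma tensor_col_S_sub_R p : tensor_r p S_hom -> tensor_r p R_hom.
Proof.
case: p => [[[[A|] ?] [[B|] ?]]|] //=.
have [n An] := atom_singleton (svalP A); have [m Bm] := atom_singleton (svalP B).
move=> /(chuF_r_S_row An Bm) notS; apply/(chuF_r_R_row An Bm).
exact: contra (subsetP (proper_sub Rrel_proper_Srel) (n, m)) notS.
Qed.

Lemma tensor_not_column_rigid : ~ column_rigid (tensor (chuF leL) (chuF leL)).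
Proof.
move=> rigid.
have S_col_ne : exists p, tensor_r p S_hom.
  by exists (tpoint 3%:R 0); apply/tensor_r_tpoint_S; rewrite mem_Srel !inE.
have inR : tensor_r (tpoint 0 3%:R) R_hom by apply/tensor_r_tpoint_R; rewrite mem_Rrel !inE.
have := rigid S_hom R_hom S_col_ne tensor_col_S_sub_R _ inR.
by move/tensor_r_tpoint_S; rewrite mem_Srel !inE.
Qed.

Theorem mainTheorem12 :
  (forall n m : 'Z_6, orth n m -> orth m n) /\
  (forall n : 'Z_6, ~~ orth n n) /\
  separating (fun n m : 'Z_6 => orth n m) /\
  complete_lattice leL /\ atomistic leL /\ orthocomplementation leL ocL /\
  irreducible leL /\
  closedL setT /\ (forall A B, closedL A -> closedL B -> closedL (A :&: B)) /\
  closedL set0 /\ (forall n : 'Z_6, closedL [set n]) /\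
  (exists x y : Lt, coatom leL x /\ coatom leL y /\
     sval x = primeZ 0 /\ sval y = primeZ 3%:R /\ sigmaL x :|: sigmaL y = setT) /\
  sigma_circ Rrel /\ sigma_circ Srel /\ Rrel \proper Srel /\ Srel \proper setT /\
  ~ (exists (T0 : Type) (le0 : T0 -> T0 -> Prop),
       complete_lattice le0 /\ atomistic le0 /\ coatomistic le0 /\
       chu_iso (chuF le0) (tensor (chuF leL) (chuF leL))).
Proof.
split; first by move=> n m; rewrite orth_sym.
split; first exact: orth_antirefl.
split; first exact: orth_separating.
split; first exact: complete_leL.
split; first exact: atomistic_leL.
split; first exact: orthocomplementation_ocL.
split; first exact: irreducible_leL.
split; first exact: closedL_setT.
split; first exact: closedL_setI.
split; first exact: closedL_set0.
split; first exact: closedL_set1.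
split.
  exists (Ck 0), (Ck 3%:R); split; first exact: coatom_Ck.
  split; first exact: coatom_Ck.
  do 2 split => //.
  by rewrite !sigmaL_E /= -[3%:R]add0r primeZ_add3 setUCr.
split; first exact: sigma_circ_Rrel.
split; first exact: sigma_circ_Srel.
split; first exact: Rrel_proper_Srel.
split; first exact: Srel_proper_setT.
move=> [T0 [le0 [_ [le0_atomistic [_ iso]]]]].
apply/tensor_not_column_rigid/(chu_iso_column_rigid iso).
exact: chuF_column_rigid.
Qed.
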